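(* Let $r>1$ and let $N\ge1$, $K\ge2$ be integers. Let $\gamma^*(r,K,N)$ be the supremum of $$\sum_{i=1}^{K-1}\frac{z^i}{\sum_{j=i}^Kp^j}$$ over all $p=(p^1,\dots,p^K)$ with $p^K=1/r$, $\sum_{i=1}^Kp^i=1$, $p^i>0$ for all $i$, where $z^i=(\sum_{j=1}^ip^j)^N-(\sum_{j=1}^{i-1}p^j)^N$. Then $$\eta(r,K,N)=\frac{\gamma^*(r,K,N)}{\frac{r^N-(r-1)^N}{r^{N-1}}+\gamma^*(r,K,N)}.$$
   Context: Single item auction with $N$ buyers whose values are i.i.d., each taking values $0<x^1<\dots<x^K$ with probabilities $p^i>0$, $\sum_ip^i=1$. With $z^i$ as in the claim (the probability that the maximum value equals $x^i$) and reserve index $t(x,p)=\max\{i: i\in\arg\max_{1\le k\le K}x^k\sum_{j=k}^Kp^j\}$, the efficiency loss ratio of the welfare-maximizing revenue-optimal auction (which sells to the highest bidder if that bid is at least the common reserve price $x^{t}$) is $$\mathrm{ELR}_N(x,p)=\frac{\sum_{i=1}^{t(x,p)-1}z^ix^i}{\sum_{i=1}^Kz^ix^i}.$$ The worst case ELR $\eta(r,K,N)$ is the supremum of $\mathrm{ELR}_N(x,p)$ over all $p$ with $p^i>0$, $\sum_ip^i=1$, and all $x$ with $0<x^1<\dots<x^K\le rx^1$. *)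

(* R : realType.  Indices are 0-based:
   the paper's x^1..x^K, p^1..p^K are x 0 .. x (K-1), p 0 .. p (K-1). *)
From mathcomp Require Import all_boot all_order all_algebra.
From mathcomp Require Import classical_sets reals.
Set Implicit Arguments. Unset Strict Implicit. Unset Printing Implicit Defensive.
Import Order.TTheory GRing.Theory Num.Theory.
Local Open Scope ring_scope.
Local Open Scope classical_set_scope.

Section Auction.
Variable R : realType.

(* z^{k+1} = (p^1+..+p^{k+1})^N - (p^1+..+p^k)^N : prob. that the max value is x^{k+1} *)
Definition zprob (N : nat) (p : nat -> R) (k : nat) : R :=
  (\sum_(j < k.+1) p j) ^+ N - (\sum_(j < k) p j) ^+ N.

Definition tailp (K : nat) (p : nat -> R) (k : nat) : R :=
  \sum_(k <= j < K) p j.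

(* 0-based reserve index: the largest k < K maximizing x k * tailp K p k
   (paper's t(x,p) minus one) *)
Definition reserve_idx (K : nat) (x p : nat -> R) : nat :=
  \max_(k < K | [forall j : 'I_K, x j * tailp K p j <= x k * tailp K p k]) (k : nat).

Definition ELR (K N : nat) (x p : nat -> R) : R :=
  (\sum_(i < reserve_idx K x p) zprob N p i * x i)
  / (\sum_(i < K) zprob N p i * x i).

Definition is_distr (K : nat) (p : nat -> R) : Prop :=
  (forall i, (i < K)%N -> 0 < p i) /\ \sum_(i < K) p i = 1.

Definition is_values (r : R) (K : nat) (x : nat -> R) : Prop :=
  0 < x 0%N /\ (forall i, (i.+1 < K)%N -> x i < x i.+1) /\ x K.-1 <= r * x 0%N.

Definition eta (r : R) (K N : nat) : R :=
  sup [set e | exists x p, is_distr K p /\ is_values r K x /\ e = ELR K N x p].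

Definition gamma_star (r : R) (K N : nat) : R :=
  sup [set g | exists p, is_distr K p /\ p K.-1 = r^-1 /\
        g = \sum_(i < K.-1) zprob N p i / tailp K p i].

End Auction.

From mathcomp Require Import all_boot all_order all_algebra.
From mathcomp Require Import classical_sets reals.
From mathcomp Require Import ring lra zify.
Import Order.TTheory GRing.Theory Num.Theory.
Set Implicit Arguments. Unset Strict Implicit. Unset Printing Implicit Defensive.
Local Open Scope ring_scope.

(* Fix the reserve index t of (x, p) and let F = p^1 + ... + p^t.  Optimality
   of the reserve bounds every value below it by x^t (1 - F) / T^i (T^i the tail
   probability of x^i) and forces F <= 1 - 1/r, because x^K <= r x^1.  So the
   welfare lost below the reserve is at most x^t (1 - F) sum_{i<t} z^i / T^i,
   while the welfare kept is at least x^t (1 - F^N).  Completing p above t to a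
   distribution q with q^K = 1/r -- by spreading the remaining mass 1 - 1/r - F
   between t and K, or by scaling p up when t = K - 1 -- and using that
   (1 - y^N) / ((1 - y) y^N) is nonincreasing in y yields
   C * lost <= gamma(q) * kept with C = (r^N - (r-1)^N) / r^(N-1), hence
   ELR <= gamma(q) / (C + gamma(q)).  Conversely, for q with q^K = 1/r the values
   x^i = 1 / T^i make all prices equally profitable, so the reserve is the top
   value and ELR = gamma(q) / (C + gamma(q)).  As g |-> g / (C + g) is an
   increasing bijection from [0, +oo) onto [0, 1), the two suprema correspond. *)

Section RealFieldInequalities.
Variable R : realFieldType.

Lemma ler_geom_ratio (a y : R) N : 0 <= y -> y <= a -> a < 1 ->
  (1 - a ^+ N) * (1 - y) * y ^+ N <= (1 - y ^+ N) * (1 - a) * a ^+ N.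
Proof.
move=> y0 ya a1; have a0 := le_trans y0 ya.
have geomE (z : R) : 1 - z ^+ N = (1 - z) * \sum_(i < N) z ^+ i.
  by rewrite -{1}(expr1n R N) subrXX; under eq_bigr do rewrite expr1n mul1r.
have sum_le : (\sum_(i < N) a ^+ i) * y ^+ N <= (\sum_(i < N) y ^+ i) * a ^+ N.
  rewrite !mulr_suml; apply: ler_sum => -[i /= iN] _.
  rewrite -(subnKC (ltnW iN)) !exprD mulrCA [y ^+ i * _]mulrCA.
  rewrite [X in _ <= X]mulrCA !ler_wpM2l ?exprn_ge0 //.
  by rewrite lerXn2r ?nnegrE.
have c0 : 0 <= (1 - a) * (1 - y).
  by apply: mulr_ge0; rewrite subr_ge0 ?ltW // (le_lt_trans ya a1).
rewrite !geomE; have := ler_wpM2l c0 sum_le.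
by congr (_ <= _); ring.
Qed.

Lemma ler_share (A B C g : R) : 0 <= A -> 0 <= B -> 0 < C -> 0 <= g ->
  C * A <= g * B -> A / (A + B) <= g / (C + g).
Proof.
move=> A0 B0 C0 g0 CA; have Cg : 0 < C + g by rewrite ltr_wpDr.
have [AB0|AB_neq0] := eqVneq (A + B) 0; first by rewrite AB0 invr0 mulr0 divr_ge0 // ltW.
have AB : 0 < A + B by rewrite lt_def AB_neq0 addr_ge0.
by rewrite ler_pdivrMr // mulrAC ler_pdivlMr //; nra.
Qed.

Lemma ler_extension_gain (C y S W u v : R) : 0 < 1 - y -> 0 < u -> 0 <= S -> S * (1 - y) <= u ->
  W * (1 - y) = v - u -> u <= v -> u <= 1 -> C * (1 - y) * u <= (1 - u) * v ->
  C * (1 - y) * S <= (S + W) * (1 - u).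
Proof.
move=> y1 u0 S0 Su WE uv u1 Cu.
rewrite -subr_ge0 -(pmulr_rge0 _ (mulr_gt0 y1 u0)).
(* The scaled defect is affine in s = S (1 - y) in [0, u]: a combination of its
   (nonnegative) values at s = 0 and s = u. *)
have -> : (1 - y) * u * ((S + W) * (1 - u) - C * (1 - y) * S) =
    (u - S * (1 - y)) * ((v - u) * (1 - u)) + S * (1 - y) * ((1 - u) * v - C * (1 - y) * u).
  have -> : v = W * (1 - y) + u by rewrite WE subrK.
  ring.
apply: addr_ge0; apply: mulr_ge0; rewrite ?subr_ge0 //.
- by apply: mulr_ge0; rewrite subr_ge0.
- exact: mulr_ge0 S0 (ltW y1).
Qed.

End RealFieldInequalities.

Section WorstCaseELR.
Variable R : realType.
Implicit Types (p q x : nat -> R) (r : R).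

Definition cdf p k : R := \sum_(j < k) p j.

Definition gamma_sum K N p t : R := \sum_(i < t) zprob N p i / tailp K p i.

Lemma cdfS p k : cdf p k.+1 = cdf p k + p k.
Proof. by rewrite /cdf big_ord_recr. Qed.

Lemma cdf0 p : cdf p 0 = 0.
Proof. exact: big_ord0. Qed.

Lemma cdf_split p m n : (m <= n)%N -> cdf p n = cdf p m + \sum_(m <= i < n) p i.
Proof. by move=> mn; rewrite /cdf -!(big_mkord xpredT) (big_cat_nat (leq0n m) mn). Qed.

Lemma sum_zprob N p m n : (m <= n)%N ->
  \sum_(m <= i < n) zprob N p i = cdf p n ^+ N - cdf p m ^+ N.
Proof. exact: (telescope_sumr (fun k => cdf p k ^+ N)). Qed.

Lemma tailp_last K p : (0 < K)%N -> tailp K p K.-1 = p K.-1.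
Proof. by case: K => // K _; rewrite /tailp big_nat1. Qed.

Section Distribution.
Variables (K N : nat) (p : nat -> R).
Hypothesis p_distr : is_distr K p.

Lemma distr_ge0 i : (i < K)%N -> 0 <= p i.
Proof. by move=> iK; apply/ltW/p_distr.1. Qed.

Lemma cdf_le i j : (i <= j <= K)%N -> cdf p i <= cdf p j.
Proof.
case/andP=> ij jK; rewrite (cdf_split p ij) lerDl big_nat_cond.
by apply: sumr_ge0 => k /andP[/andP[_ kj] _]; apply/distr_ge0/(leq_trans kj).
Qed.

Lemma cdf_ge0 i : (i <= K)%N -> 0 <= cdf p i.
Proof. by move=> iK; rewrite -(cdf0 p); apply: cdf_le; rewrite iK. Qed.

Lemma cdf_gt0 t : (0 < t <= K)%N -> 0 < cdf p t.
Proof.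
case: t => // t /andP[_ tK]; rewrite cdfS ltr_pwDr ?p_distr.1 //.
exact: cdf_ge0 (ltnW tK).
Qed.

Lemma tailpE i : (i <= K)%N -> tailp K p i = 1 - cdf p i.
Proof. by move=> iK; rewrite -p_distr.2 -/(cdf p K) (cdf_split p iK) addrC addKr. Qed.

Lemma tailp_le i j : (i <= j <= K)%N -> tailp K p j <= tailp K p i.
Proof.
move=> /andP[ij jK]; rewrite !tailpE ?(leq_trans ij) // lerD2l lerN2.
by apply: cdf_le; rewrite ij.
Qed.

Lemma tailp_gt0 i : (i < K)%N -> 0 < tailp K p i.
Proof.
move=> iK; rewrite /tailp big_ltn // ltr_pwDl ?p_distr.1 // big_nat_cond.
by apply: sumr_ge0 => j /andP[/andP[_ jK] _]; apply: distr_ge0.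
Qed.

Lemma zprob_ge0 k : (k < K)%N -> 0 <= zprob N p k.
Proof.
move=> kK; rewrite subr_ge0 -/(cdf p k) -/(cdf p k.+1).
by apply: lerXn2r; rewrite ?nnegrE ?cdf_ge0 ?cdf_le ?leqnSn // ltnW.
Qed.

Lemma sum_ztail_ge m n : (m <= n <= K)%N ->
  (cdf p n ^+ N - cdf p m ^+ N) / tailp K p m <= \sum_(m <= i < n) zprob N p i / tailp K p i.
Proof.
case/andP=> mn nK; rewrite -sum_zprob // mulr_suml.
apply: ler_sum_nat => i /andP[mi i_n]; have iK := leq_trans i_n nK.
rewrite ler_wpM2l ?zprob_ge0 // lef_pV2 ?posrE ?tailp_gt0 ?(leq_ltn_trans mi) //.
by apply: tailp_le; rewrite mi ltnW.
Qed.

Lemma sum_ztail_le m n : (m <= n < K)%N ->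
  \sum_(m <= i < n) zprob N p i / tailp K p i <= (cdf p n ^+ N - cdf p m ^+ N) / tailp K p n.
Proof.
case/andP=> mn nK; rewrite -sum_zprob // mulr_suml.
apply: ler_sum_nat => i /andP[mi i_n]; have iK := ltn_trans i_n nK.
rewrite ler_wpM2l ?zprob_ge0 // lef_pV2 ?posrE ?tailp_gt0 //.
by apply: tailp_le; rewrite (ltnW i_n) ltnW.
Qed.

Lemma gamma_sum_ge0 t : (t <= K)%N -> 0 <= gamma_sum K N p t.
Proof.
move=> tK; apply: sumr_ge0 => -[i /= it] _; have iK := leq_trans it tK.
by rewrite divr_ge0 ?zprob_ge0 ?ltW ?tailp_gt0.
Qed.

Lemma gamma_sum_tailp_le t : (0 < N)%N -> (t < K)%N ->
  gamma_sum K N p t * tailp K p t <= cdf p t ^+ N.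
Proof.
move=> N0 tK; rewrite -ler_pdivlMr ?tailp_gt0 // /gamma_sum.
rewrite -(big_mkord xpredT (fun i => zprob N p i / tailp K p i)).
by have := @sum_ztail_le 0 t; rewrite tK cdf0 expr0n gtn_eqF // subr0; apply.
Qed.

End Distribution.

Lemma gamma_sum_le r K N p : 1 < r -> (0 < N)%N -> (0 < K)%N -> is_distr K p -> p K.-1 = r^-1 ->
  gamma_sum K N p K.-1 <= r.
Proof.
move=> r1 N0 K0 pd plast; have r0 := lt_trans ltr01 r1.
have K1 : (K.-1 < K)%N by rewrite prednK.
have := gamma_sum_tailp_le pd N0 K1; rewrite tailp_last // plast => Gle.
rewrite -[r]mul1r -ler_pdivrMr //; apply: le_trans Gle _.
rewrite exprn_ile1 ?(cdf_ge0 pd (ltnW K1)) // -pd.2 -/(cdf p K).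
by apply: (cdf_le pd); rewrite leq_pred leqnn.
Qed.

Lemma cdf_scale p q lam t : (forall i, (i < t)%N -> q i = lam * p i) ->
  forall i, (i <= t)%N -> cdf q i = lam * cdf p i.
Proof.
move=> qE i it; rewrite /cdf mulr_sumr.
by apply: eq_bigr => -[j /= ji] _; rewrite qE // (leq_trans ji).
Qed.

Lemma gamma_sum_scale K N p q lam t : is_distr K p -> is_distr K q -> 1 <= lam ->
  (t <= K)%N -> (forall i, (i < t)%N -> q i = lam * p i) ->
  lam ^+ N * gamma_sum K N p t <= gamma_sum K N q t.
Proof.
move=> pd qd lam1 tK qE; rewrite mulr_sumr; apply: ler_sum => -[i /= it] _.
have iK := leq_trans it tK.
have zE : zprob N q i = lam ^+ N * zprob N p i.
  rewrite /zprob -/(cdf q i.+1) -/(cdf q i) -/(cdf p i.+1) -/(cdf p i).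
  by rewrite (cdf_scale qE it) (cdf_scale qE (ltnW it)) !exprMn mulrBr.
have lamz_ge0 : 0 <= lam ^+ N * zprob N p i.
  by apply: mulr_ge0; [apply/exprn_ge0/(le_trans ler01) | apply: (zprob_ge0 N pd)].
rewrite zE mulrA ler_wpM2l // lef_pV2 ?posrE ?tailp_gt0 //.
rewrite (tailpE pd (ltnW iK)) (tailpE qd (ltnW iK)) (cdf_scale qE (ltnW it)).
by rewrite lerD2l lerN2 ler_peMl // (cdf_ge0 pd (ltnW iK)).
Qed.

Lemma gamma_sum_extend_ge K N p q lam t u : is_distr K p -> is_distr K q -> 1 <= lam ->
  (t <= u <= K)%N -> (forall i, (i < t)%N -> q i = lam * p i) ->
  lam ^+ N * gamma_sum K N p t + (cdf q u ^+ N - cdf q t ^+ N) / tailp K q t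
    <= gamma_sum K N q u.
Proof.
move=> pd qd lam1 /andP[tu uK] qE.
rewrite {2}/gamma_sum -(big_mkord xpredT (fun i => zprob N q i / tailp K q i)).
rewrite (big_cat_nat (leq0n t) tu) /= big_mkord lerD ?(sum_ztail_ge N qd) ?tu //.
exact: (gamma_sum_scale N pd qd lam1 (leq_trans tu uK) qE).
Qed.

Definition splice K t (lam c b : R) p i : R :=
  if (i < t)%N then lam * p i else if (i < K.-1)%N then c else b.

Section Splice.
Variables (K t : nat) (lam c b : R) (p : nat -> R).
Hypothesis tK : (t <= K.-1)%N.
Let q := splice K t lam c b p.

Lemma splice_prefix i : (i < t)%N -> q i = lam * p i.
Proof. by rewrite /q /splice => ->. Qed.

Lemma splice_last : q K.-1 = b.
Proof. by rewrite /q /splice ltnn ltnNge tK. Qed.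

Lemma cdf_splice_pred : cdf q K.-1 = lam * cdf p t + (K.-1 - t)%:R * c.
Proof.
rewrite (cdf_split q tK) (cdf_scale splice_prefix) // mulr_natl -sumr_const_nat.
by congr (_ + _); apply: eq_big_nat => i /andP[ti iK]; rewrite /q /splice ltnNge ti iK.
Qed.

Lemma splice_distr : (0 < K)%N -> (forall i, (i < t)%N -> 0 < p i) ->
  0 < lam -> 0 < c -> 0 < b -> lam * cdf p t + (K.-1 - t)%:R * c + b = 1 -> is_distr K q.
Proof.
move=> K0 p_gt0 lam0 c0 b0 sum1; split.
  by move=> i _; rewrite /q /splice; case: ifPn => [/p_gt0|_]; [exact: mulr_gt0 | case: ifP].
by rewrite -/(cdf q K) -(prednK K0) cdfS splice_last cdf_splice_pred.
Qed.

End Splice.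

Lemma exists_admissible r K : 1 < r -> (2 <= K)%N ->
  exists q, is_distr K q /\ q K.-1 = r^-1.
Proof.
move=> r1 K2; have K1 : (0 < K.-1)%N by rewrite -ltnS prednK // ltnW.
have ri0 : 0 < r^-1 by rewrite invr_gt0 (lt_trans ltr01).
have ri1 : r^-1 < 1 by rewrite invf_lt1 // (lt_trans ltr01).
pose c := (1 - r^-1) / (K.-1)%:R.
exists (splice K 0 1 c r^-1 (fun=> 0)); split; last exact: splice_last.
apply: splice_distr => //; first exact: ltnW.
- by rewrite divr_gt0 ?ltr0n // subr_gt0.
- by rewrite cdf0 mulr0 add0r subn0 /c mulrC divfK ?pnatr_eq0 -?lt0n // subrK.
Qed.

Lemma splice_gamma_ge r K N p t lam c : 1 < r -> is_distr K p -> (0 < K)%N -> (t <= K.-1)%N ->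
  1 <= lam -> 0 < c -> lam * cdf p t + (K.-1 - t)%:R * c = 1 - r^-1 ->
  let q := splice K t lam c r^-1 p in
  [/\ is_distr K q, q K.-1 = r^-1 &
    lam ^+ N * gamma_sum K N p t + ((1 - r^-1) ^+ N - (lam * cdf p t) ^+ N) / (1 - lam * cdf p t)
      <= gamma_sum K N q K.-1].
Proof.
move=> r1 pd K0 tK lam1 c0 sumE q.
have tK' : (t <= K)%N := leq_trans tK (leq_pred K).
have q_prefix := @splice_prefix K t lam c r^-1 p.
have qd : is_distr K q.
  apply: splice_distr => //.
  - by move=> i it; apply: pd.1; rewrite (leq_trans it) // (leq_trans tK) // leq_pred.
  - exact: lt_le_trans ltr01 lam1.
  - by rewrite invr_gt0 (lt_trans ltr01).
  - by rewrite sumE subrK.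
split=> //; first exact: splice_last.
rewrite -sumE -(cdf_splice_pred lam c r^-1 p tK) -(cdf_scale q_prefix (leqnn t)).
rewrite -(tailpE qd tK'); apply: (gamma_sum_extend_ge N pd qd lam1 _ q_prefix).
by rewrite tK leq_pred.
Qed.

Definition top_welfare r N : R := r * (1 - (1 - r^-1) ^+ N).

Lemma top_welfareE r N : 0 < r -> (0 < N)%N ->
  (r ^+ N - (r - 1) ^+ N) / r ^+ N.-1 = top_welfare r N.
Proof.
move=> r0 N0; rewrite /top_welfare (_ : 1 - r^-1 = (r - 1) / r); last by field; rewrite gt_eqF.
by rewrite expr_div_n -(prednK N0) exprS; field; rewrite expf_neq0 // gt_eqF.
Qed.

Lemma top_welfare_gt0 r N : 1 < r -> (0 < N)%N -> 0 < top_welfare r N.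
Proof.
move=> r1 N0; have r0 := lt_trans ltr01 r1.
rewrite mulr_gt0 // subr_gt0 exprn_ilt1 ?subr_ge0 ?invf_le1 ?(ltW r1) -?lt0n //.
by rewrite ltrBlDr ltrDl invr_gt0.
Qed.

Lemma top_welfare_bound r N y : 1 < r -> 0 <= y -> y <= 1 - r^-1 ->
  top_welfare r N * (1 - y) * y ^+ N <= (1 - y ^+ N) * (1 - r^-1) ^+ N.
Proof.
move=> r1 y0 ya; have r0 := lt_trans ltr01 r1.
have a1 : 1 - r^-1 < 1 by rewrite ltrBlDr ltrDl invr_gt0.
move: (ler_geom_ratio N y0 ya a1) => /(ler_wpM2l (ltW r0)).
rewrite /top_welfare; congr (_ <= _); first by ring.
by field; rewrite gt_eqF.
Qed.

Section Dominate.
Variables (r : R) (K N : nat) (p : nat -> R) (t : nat).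
Hypotheses (r1 : 1 < r) (N0 : (0 < N)%N) (pd : is_distr K p) (tK : (t <= K.-1)%N).
Hypotheses (F0 : 0 < cdf p t) (Fa : cdf p t <= 1 - r^-1).

Let t_ltK : (t < K)%N.
Proof.
have t0 : (0 < t)%N by rewrite lt0n; apply: contraTneq F0 => ->; rewrite cdf0 ltxx.
lia.
Qed.

Let K_gt0 : (0 < K)%N. Proof. exact: leq_ltn_trans (leq0n t) t_ltK. Qed.

Let a_lt1 : 1 - r^-1 < 1. Proof. by rewrite ltrBlDr ltrDl invr_gt0 (lt_trans ltr01). Qed.

Let kept_ge0 : 0 <= 1 - cdf p t ^+ N.
Proof. by rewrite subr_ge0 exprn_ile1 ?(ltW F0) // ltW // (le_lt_trans Fa). Qed.

Lemma gamma_sum_dominate_spread : (t < K.-1)%N -> cdf p t < 1 - r^-1 ->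
  exists q, [/\ is_distr K q, q K.-1 = r^-1 &
    top_welfare r N * (1 - cdf p t) * gamma_sum K N p t
      <= gamma_sum K N q K.-1 * (1 - cdf p t ^+ N)].
Proof.
move=> tlt Fa_strict.
have F1 : 0 < 1 - cdf p t by rewrite subr_gt0 (le_lt_trans Fa).
have S0 := gamma_sum_ge0 N pd (ltnW t_ltK).
have SF := gamma_sum_tailp_le pd N0 t_ltK; rewrite (tailpE pd (ltnW t_ltK)) in SF.
have key := top_welfare_bound N r1 (ltW F0) Fa.
set F := cdf p t in Fa_strict F1 SF key *; set a := 1 - r^-1 in Fa_strict key *.
pose c := (a - F) / (K.-1 - t)%:R.
have m0 : 0 < (K.-1 - t)%:R :> R by rewrite ltr0n subn_gt0.
have c0 : 0 < c by rewrite divr_gt0 // subr_gt0 Fa_strict.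
have sumE : 1 * F + (K.-1 - t)%:R * c = a.
  by rewrite mul1r mulrC divfK ?gt_eqF // addrC subrK.
have [qd qlast qge] := splice_gamma_ge N r1 pd K_gt0 tK (lexx 1) c0 sumE.
eexists; split; [exact: qd | exact: qlast |].
rewrite expr1n !mul1r -/F -/a in qge; apply: le_trans (ler_wpM2r kept_ge0 qge).
apply: (ler_extension_gain (v := a ^+ N)) => //; first exact: exprn_gt0.
- by rewrite divfK ?gt_eqF.
- by rewrite lerXn2r ?nnegrE ?(ltW F0) ?(ltW (lt_le_trans F0 Fa)).
- by rewrite exprn_ile1 ?(ltW F0) ?(ltW (le_lt_trans Fa a_lt1)).
Qed.

Lemma gamma_sum_dominate_scale : t = K.-1 ->
  exists q, [/\ is_distr K q, q K.-1 = r^-1 &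
    top_welfare r N * (1 - cdf p t) * gamma_sum K N p t
      <= gamma_sum K N q K.-1 * (1 - cdf p t ^+ N)].
Proof.
move=> tE; have S0 := gamma_sum_ge0 N pd (ltnW t_ltK).
have key := top_welfare_bound N r1 (ltW F0) Fa.
set F := cdf p t in key *; set a := 1 - r^-1 in key *.
pose lam := a / F.
have lamF : lam * F = a by rewrite divfK ?gt_eqF.
have lam1 : 1 <= lam by rewrite ler_pdivlMr // mul1r.
have sumE : lam * F + (K.-1 - t)%:R * 1 = a by rewrite tE subnn mul0r addr0.
have [qd qlast qge] := splice_gamma_ge N r1 pd K_gt0 tK lam1 ltr01 sumE.
eexists; split; [exact: qd | exact: qlast |].
rewrite -/F lamF -/a subrr mul0r addr0 in qge.
apply: le_trans (ler_wpM2r kept_ge0 qge).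
rewrite [X in _ <= X]mulrAC ler_wpM2r // -(ler_pM2r (exprn_gt0 N F0)).
by rewrite [X in _ <= X]mulrAC -exprMn lamF [X in _ <= X]mulrC.
Qed.

Lemma gamma_sum_dominate : ((t < K.-1)%N -> cdf p t < 1 - r^-1) ->
  exists q, [/\ is_distr K q, q K.-1 = r^-1 &
    top_welfare r N * (1 - cdf p t) * gamma_sum K N p t
      <= gamma_sum K N q K.-1 * (1 - cdf p t ^+ N)].
Proof.
move=> Fa_strict; case: (ltnP t K.-1) => [tlt | tge].
  exact: gamma_sum_dominate_spread tlt (Fa_strict tlt).
by apply: gamma_sum_dominate_scale; apply/eqP; rewrite eqn_leq tK tge.
Qed.

End Dominate.

Lemma values_lt r K x : is_values r K x -> forall i j, (i < j < K)%N -> x i < x j.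
Proof.
case=> _ [x_incr _] i j /andP[ij jK].
have := @Order.NatMonotonyTheory.homo_ltn_lt_in _ _ [pred k | (k < K)%N] x.
move=> /(_ _ _ i j _ _ ij) /=; apply => //.
- by move=> a b /= aK bK c /andP[_ cb]; apply: ltn_trans bK.
- by move=> k _; apply: x_incr.
- exact: ltn_trans ij jK.
Qed.

Lemma values_le r K x : is_values r K x -> forall i j, (i <= j < K)%N -> x i <= x j.
Proof.
move=> xv i j /andP[]; rewrite leq_eqVlt => /orP[/eqP-> //|ij jK].
by apply/ltW/(values_lt xv); rewrite ij.
Qed.

Lemma values_gt0 r K x : is_values r K x -> forall i, (i < K)%N -> 0 < x i.
Proof. by move=> xv i iK; apply: lt_le_trans xv.1 (values_le xv _); rewrite iK. Qed.

Lemma zprob_values_ge0 r K N x p i : is_distr K p -> is_values r K x -> (i < K)%N ->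
  0 <= zprob N p i * x i.
Proof. by move=> pd xv iK; rewrite mulr_ge0 ?(zprob_ge0 N pd) // ltW // (values_gt0 xv). Qed.

Lemma reserve_idxP K x p : (0 < K)%N ->
  let t := reserve_idx K x p in
  [/\ (t < K)%N, forall j, (j < K)%N -> x j * tailp K p j <= x t * tailp K p t &
      forall k, (k < K)%N -> (forall j, (j < K)%N -> x j * tailp K p j <= x k * tailp K p k) ->
      (k <= t)%N].
Proof.
move=> K0 /=; pose f (k : 'I_K) := x k * tailp K p k.
have [k0 _ k0max] := @arg_maxP _ _ 'I_K (Ordinal K0) predT f isT.
pose P k := [forall j : 'I_K, f j <= f k].
have Pk0 : P k0 by apply/forallP => j; apply: k0max.
rewrite /reserve_idx (bigop.bigmax_eq_arg k0 Pk0); case: arg_maxnP => // t /forallP Pt tmax.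
split=> [| j jK | k kK kmax]; first exact: ltn_ord.
- exact: (Pt (Ordinal jK)).
- by apply: (tmax (Ordinal kK)); apply/forallP => j; apply: kmax.
Qed.

Lemma reserve_cdf_bound r K x p : 1 < r -> is_distr K p -> is_values r K x -> (0 < K)%N ->
  let t := reserve_idx K x p in
  cdf p t <= 1 - r^-1 /\ ((t < K.-1)%N -> cdf p t < 1 - r^-1).
Proof.
move=> r1 pd xv K0 /=; have r0 := lt_trans ltr01 r1.
have [tK tmax _] := reserve_idxP x p K0; set t := reserve_idx K x p in tK tmax *.
have xt0 := values_gt0 xv tK.
have K1 : (K.-1 < K)%N by rewrite prednK.
have x0_le : x 0%N <= x t * (1 - cdf p t).
  by have := tmax 0%N K0; rewrite !(tailpE pd) ?(ltnW tK) // cdf0 subr0 mulr1.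
have xt_le : x t <= x K.-1 by apply: (values_le xv); rewrite K1 andbT -ltnS prednK.
split.
  rewrite lerBrDr -lerBrDl -(ler_pM2l xt0) mulrC.
  apply: le_trans x0_le; rewrite ler_pdivrMl //.
  exact: le_trans xt_le xv.2.2.
move=> tlt; rewrite ltrBrDr -ltrBrDl -(ltr_pM2l xt0) mulrC.
apply: lt_le_trans x0_le; rewrite ltr_pdivrMl //.
by apply: lt_le_trans xv.2.2; apply: (values_lt xv); rewrite tlt.
Qed.

Lemma below_reserve_le K N x p t : is_distr K p -> (t < K)%N ->
  (forall j, (j < K)%N -> x j * tailp K p j <= x t * tailp K p t) ->
  \sum_(i < t) zprob N p i * x i <= x t * tailp K p t * gamma_sum K N p t.
Proof.
move=> pd tK tmax; rewrite mulr_sumr; apply: ler_sum => -[i /= it] _.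
have iK := ltn_trans it tK; have Ti0 := tailp_gt0 pd iK.
rewrite mulrCA ler_wpM2l ?(zprob_ge0 N pd) // ler_pdivlMr //.
exact: tmax.
Qed.

Lemma above_reserve_ge r K N x p t : is_distr K p -> is_values r K x -> (t <= K)%N ->
  x t * (1 - cdf p t ^+ N) <= \sum_(t <= i < K) zprob N p i * x i.
Proof.
move=> pd xv tK; rewrite -(expr1n R N) -pd.2 -/(cdf p K) -sum_zprob // mulr_sumr.
apply: ler_sum_nat => i /andP[ti iK]; rewrite mulrC ler_wpM2l ?(zprob_ge0 N pd) //.
by apply: (values_le xv); rewrite ti.
Qed.

Lemma lost_welfare_le r K N x p : 1 < r -> (0 < N)%N -> (2 <= K)%N ->
  is_distr K p -> is_values r K x ->
  let t := reserve_idx K x p in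
  exists q, [/\ is_distr K q, q K.-1 = r^-1 &
    top_welfare r N * \sum_(i < t) zprob N p i * x i
      <= gamma_sum K N q K.-1 * \sum_(t <= i < K) zprob N p i * x i].
Proof.
move=> r1 N0 K2 pd xv; have K0 : (0 < K)%N by rewrite ltnW.
have [tK tmax _] := reserve_idxP x p K0; set t := reserve_idx K x p in tK tmax *.
have [t0 | t_gt0] := posnP t.
  have [q [qd qlast]] := exists_admissible r1 K2; exists q; split => //.
  rewrite t0 big_ord0 mulr0 mulr_ge0 ?(gamma_sum_ge0 N qd (leq_pred K)) //.
  rewrite big_nat_cond; apply: sumr_ge0 => i /andP[/andP[_ iK] _].
  exact: zprob_values_ge0 pd xv iK.
have [Fa Fa_strict] := reserve_cdf_bound r1 pd xv K0.
have F0 : 0 < cdf p t by apply: (cdf_gt0 pd); rewrite t_gt0 ltnW.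
have tK1 : (t <= K.-1)%N by rewrite -ltnS prednK.
have [q [qd qlast CSle]] := gamma_sum_dominate r1 N0 pd tK1 F0 Fa Fa_strict.
exists q; split => //; have xt0 := values_gt0 xv tK.
have C0 := ltW (top_welfare_gt0 r1 N0); have G0 := gamma_sum_ge0 N qd (leq_pred K).
apply: le_trans (ler_wpM2l C0 (below_reserve_le N pd tK tmax)) _.
apply: le_trans (ler_wpM2l G0 (above_reserve_ge N pd xv (ltnW tK))).
rewrite (tailpE pd (ltnW tK)).
by have := ler_wpM2l (ltW xt0) CSle; congr (_ <= _); ring.
Qed.

Lemma ELR_le_share r K N x p : 1 < r -> (0 < N)%N -> (2 <= K)%N ->
  is_distr K p -> is_values r K x ->
  exists q, [/\ is_distr K q, q K.-1 = r^-1 &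
    ELR K N x p <= gamma_sum K N q K.-1 / (top_welfare r N + gamma_sum K N q K.-1)].
Proof.
move=> r1 N0 K2 pd xv; have K0 : (0 < K)%N by rewrite ltnW.
have [q [qd qlast lost_le]] := lost_welfare_le r1 N0 K2 pd xv.
have [tK _ _] := reserve_idxP x p K0; set t := reserve_idx K x p in tK lost_le *.
exists q; split => //.
rewrite /ELR -/t -(@big_mkord _ _ _ K xpredT (fun i => zprob N p i * x i)).
rewrite (big_cat_nat (leq0n t) (ltnW tK)) /= big_mkord.
apply: ler_share; rewrite ?top_welfare_gt0 ?(gamma_sum_ge0 N qd (leq_pred K)) //.
- apply: sumr_ge0 => -[i /= it] _.
  exact: zprob_values_ge0 pd xv (ltn_trans it tK).
- rewrite big_nat_cond; apply: sumr_ge0 => i /andP[/andP[_ iK] _].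
  exact: zprob_values_ge0 pd xv iK.
Qed.

Lemma ELR_tailp_inv r K N p : (0 < K)%N -> is_distr K p -> p K.-1 = r^-1 ->
  let x i := (tailp K p i)^-1 in
  is_values r K x /\
  ELR K N x p = gamma_sum K N p K.-1 / (top_welfare r N + gamma_sum K N p K.-1).
Proof.
move=> K0 pd plast x.
have K1 : (K.-1 < K)%N by rewrite prednK.
have T0 : tailp K p 0 = 1 by rewrite (tailpE pd) // cdf0 subr0.
have xT i : (i < K)%N -> x i * tailp K p i = 1.
  by move=> iK; rewrite mulVf ?gt_eqF ?(tailp_gt0 pd).
have xv : is_values r K x.
  split; first by rewrite /x T0 invr1.
  split; last by rewrite /x T0 tailp_last // plast invrK invr1 mulr1.
  move=> i iK; rewrite /x ltf_pV2 ?posrE ?(tailp_gt0 pd) ?(ltnW iK) //.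
  rewrite (tailpE pd (ltnW iK)) (tailpE pd (ltnW (ltnW iK))) cdfS.
  by rewrite ltrD2l ltrN2 ltrDl pd.1 // ltnW.
have [tK _ tmax] := reserve_idxP x p K0.
have tE : reserve_idx K x p = K.-1.
  apply/eqP; rewrite eqn_leq tmax // ?andbT; last by move=> j jK; rewrite !xT.
  by rewrite -ltnS prednK.
split=> //; rewrite /ELR tE -(prednK K0) big_ord_recr /= prednK //.
rewrite [X in _ / X]addrC; congr (_ / (_ + _)).
rewrite /x tailp_last // plast invrK /zprob prednK // -/(cdf p K) -/(cdf p K.-1).
have cdfK : cdf p K = 1 := pd.2.
have cdf_pred : cdf p K.-1 = 1 - r^-1.
  by rewrite -plast -(tailp_last p K0) (tailpE pd (ltnW K1)) opprB addrC subrK.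
by rewrite cdfK cdf_pred expr1n mulrC.
Qed.

Lemma sup_share (C : R) (E G : set R) : 0 < C -> has_sup G -> (forall g, G g -> 0 <= g) ->
  (forall e, E e -> exists2 g, G g & e <= g / (C + g)) -> (forall g, G g -> E (g / (C + g))) ->
  sup E = sup G / (C + sup G).
Proof.
move=> C0 hG G0 EG GE; have [[g0 Gg0] _] := hG.
have s0 : 0 <= sup G := le_trans (G0 _ Gg0) (sup_upper_bound hG Gg0).
have share_le g h : 0 <= g -> g <= h -> g / (C + g) <= h / (C + h).
  move=> g_ge0 gh; rewrite addrC; apply: ler_share => //; first exact: ltW.
    exact: le_trans gh.
  by rewrite mulrC ler_wpM2r // ltW.
have ubE : ubound E (sup G / (C + sup G)).
  move=> e /EG[g Gg eg]; apply: le_trans eg (share_le _ _ (G0 _ Gg) _).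
  exact: (sup_upper_bound hG).
have hE : has_sup E by split; [exists (g0 / (C + g0)); apply: GE | exists (sup G / (C + sup G))].
have Es : sup E <= sup G / (C + sup G) by apply: ge_sup => //; case: hE.
have Cs : 0 < C + sup G by rewrite ltr_wpDr.
have E1 : sup E < 1.
  by apply: le_lt_trans Es _; rewrite ltr_pdivrMr // mul1r ltrDr.
have ubG : ubound G (sup E * C / (1 - sup E)).
  move=> g Gg; have := sup_upper_bound hE (GE _ Gg).
  rewrite ler_pdivrMr ?ltr_wpDr ?G0 // ler_pdivlMr ?subr_gt0 //; nra.
have := ge_sup hG.1 ubG; rewrite ler_pdivlMr ?subr_gt0 // => sGE.
by apply/eqP; rewrite eq_le Es ler_pdivrMr //; nra.
Qed.

End WorstCaseELR.

Theorem proposition6 (R : realType) (r : R) (N K : nat) :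
  1 < r -> (1 <= N)%N -> (2 <= K)%N ->
  eta r K N =
  gamma_star r K N /
    ((r ^+ N - (r - 1) ^+ N) / r ^+ N.-1 + gamma_star r K N).
Proof.
move=> r1 N0 K2; have K0 : (0 < K)%N by rewrite ltnW.
rewrite top_welfareE ?(lt_trans ltr01) //; apply: sup_share.
- exact: top_welfare_gt0.
- have [q0 [q0d q0last]] := exists_admissible r1 K2.
  split; first by exists (gamma_sum K N q0 K.-1), q0.
  by exists r => _ [q [qd [qlast ->]]]; apply: gamma_sum_le.
- by move=> _ [q [qd [_ ->]]]; apply: (gamma_sum_ge0 N qd (leq_pred K)).
- move=> _ [x [p [pd [xv ->]]]].
  have [q [qd qlast ELRle]] := ELR_le_share r1 N0 K2 pd xv.
  by exists (gamma_sum K N q K.-1) => //; exists q.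
- move=> _ [p [pd [plast ->]]]; have [xv ELRE] := ELR_tailp_inv N K0 pd plast.
  by exists (fun i => (tailp K p i)^-1), p.
Qed.
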